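(* There exists $\varphi_1>\frac{\pi}{2}$ such that for every $s\in\mathbb C$ with $\frac{\pi}{2}<|\arg s|<\varphi_1$ there exists $\sigma>0$ with $s\in\Omega_\sigma$ and $\sigma<(\Re\sqrt s)^2$.
   Context: $\sqrt z$ denotes the branch with $\Re\sqrt z>0$ for $|\arg z|<\pi$. For $\sigma>0$: $\Omega^1_\sigma=\{s:\Re s\le0,\ \sigma<|\Im s|\}\cup\{s:\Re s>0,\ \sigma<|s|\}$; $\Omega^2_\sigma=\{s:\ \sigma<|s|+\Re s,\ \sigma>\frac{-\Re(s)|s|}{2(|s|+\Re s)}\}$; $\Omega^3_\sigma=\{s\neq0:\ \sigma(|s|-\sigma+\Re s)-(\sigma(1+\frac{\Re s}{|s|})+\frac12\Re s)^2>0\}$; $\Omega_\sigma=\Omega^1_\sigma\cap(\Omega^2_\sigma\cup\Omega^3_\sigma)$. *)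

From Stdlib Require Import Reals Lra.
Open Scope R_scope.

Definition Cplx : Type := (R * R)%type.
Definition Re (s : Cplx) : R := fst s.
Definition Im (s : Cplx) : R := snd s.
Definition Cmod (s : Cplx) : R := sqrt (Re s ^ 2 + Im s ^ 2).

(* Principal argument, values in (-PI, PI]; Arg 0 = 0 (irrelevant here). *)
Definition Arg (s : Cplx) : R :=
  let x := Re s in let y := Im s in
  if Rlt_dec 0 x then atan (y / x)
  else if Rlt_dec x 0 then
    (if Rle_dec 0 y then atan (y / x) + PI else atan (y / x) - PI)
  else if Rlt_dec 0 y then PI / 2
  else if Rlt_dec y 0 then - (PI / 2)
  else 0.

(* Principal square root: the branch with Re sqrt z > 0 for |arg z| < PI,
   i.e. sqrt z = sqrt((|z|+Re z)/2) + i sgn(Im z) sqrt((|z|-Re z)/2). *)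
Definition Csqrt (s : Cplx) : Cplx :=
  (sqrt ((Cmod s + Re s) / 2),
   (if Rlt_dec (Im s) 0 then - sqrt ((Cmod s - Re s) / 2)
    else sqrt ((Cmod s - Re s) / 2))).

Definition Omega1 (sigma : R) (s : Cplx) : Prop :=
  (Re s <= 0 /\ sigma < Rabs (Im s)) \/ (0 < Re s /\ sigma < Cmod s).

Definition Omega2 (sigma : R) (s : Cplx) : Prop :=
  sigma < Cmod s + Re s /\
  sigma > - Re s * Cmod s / (2 * (Cmod s + Re s)).

Definition Omega3 (sigma : R) (s : Cplx) : Prop :=
  s <> (0, 0) /\
  sigma * (Cmod s - sigma + Re s)
    - (sigma * (1 + Re s / Cmod s) + / 2 * Re s) ^ 2 > 0.

Definition Omega (sigma : R) (s : Cplx) : Prop :=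
  Omega1 sigma s /\ (Omega2 sigma s \/ Omega3 sigma s).

(* For [s] in the left half-plane with [t = -Re s], [r = |s|], condition
   [Omega1] only asks [sigma < |Im s|] and [Omega2] asks
   [t r / (2 (r - t)) < sigma < r - t], while [(Re sqrt s)^2 = (r - t) / 2].
   As soon as [r > 3 t] we have [t r < (r - t)^2], so the window
   [(t r / (2 (r - t)), (r - t) / 2)] is nonempty, and it lies below [|Im s|]
   because [r <= t + |Im s|].  Near the imaginary axis, i.e. for
   [pi/2 < |arg s| < pi - atan 3], we have [|Im s| > 3 t], hence [r > 3 t]. *)
From Stdlib Require Import Reals Lra Psatz.
Open Scope R_scope.

Lemma Cmod_ge_0 s : 0 <= Cmod s.
Proof. apply sqrt_pos. Qed.

Lemma Cmod_sqr s : Cmod s ^ 2 = Re s ^ 2 + Im s ^ 2.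
Proof. apply pow2_sqrt; nra. Qed.

Lemma Rabs_Re_le_Cmod s : Rabs (Re s) <= Cmod s.
Proof.
  pose proof (Cmod_sqr s); pose proof (Cmod_ge_0 s); pose proof (pow2_abs (Re s)).
  pose proof (Rabs_pos (Re s)); nra.
Qed.

Lemma Rabs_Im_le_Cmod s : Rabs (Im s) <= Cmod s.
Proof.
  pose proof (Cmod_sqr s); pose proof (Cmod_ge_0 s); pose proof (pow2_abs (Im s)).
  pose proof (Rabs_pos (Im s)); nra.
Qed.

Lemma Cmod_le_Rabs_add s : Cmod s <= Rabs (Re s) + Rabs (Im s).
Proof.
  pose proof (Cmod_sqr s); pose proof (Cmod_ge_0 s).
  pose proof (pow2_abs (Re s)); pose proof (pow2_abs (Im s)).
  pose proof (Rabs_pos (Re s)); pose proof (Rabs_pos (Im s)); nra.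
Qed.

Lemma Re_Csqrt_sqr s : Re (Csqrt s) ^ 2 = (Cmod s + Re s) / 2.
Proof.
  apply pow2_sqrt.
  pose proof (Rabs_Re_le_Cmod s); pose proof (Rle_abs (- Re s)); rewrite Rabs_Ropp in *; lra.
Qed.

Lemma Rabs_Arg_Re_nonneg s : 0 <= Re s -> Rabs (Arg s) <= PI / 2.
Proof.
  intro Hx; pose proof PI_RGT_0; unfold Arg.
  destruct (Rlt_dec 0 (Re s)).
  - pose proof (atan_bound (Im s / Re s)); apply Rabs_le; lra.
  - destruct (Rlt_dec (Re s) 0); [lra|].
    destruct (Rlt_dec 0 (Im s)); [rewrite Rabs_pos_eq; lra|].
    destruct (Rlt_dec (Im s) 0); [rewrite Rabs_Ropp, Rabs_pos_eq; lra|].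
    rewrite Rabs_R0; lra.
Qed.

Lemma Rabs_Arg_Re_neg s :
  Re s < 0 -> Rabs (Arg s) = PI - atan (Rabs (Im s) / - Re s).
Proof.
  intro Hx; pose proof PI_RGT_0; unfold Arg.
  destruct (Rlt_dec 0 (Re s)); [lra|].
  destruct (Rlt_dec (Re s) 0); [|lra].
  destruct (Rle_dec 0 (Im s)) as [Hy|Hy].
  - rewrite (Rabs_pos_eq (Im s)) by lra.
    replace (Im s / Re s) with (- (Im s / - Re s)) by (field; lra).
    rewrite atan_opp.
    pose proof (atan_bound (Im s / - Re s)); rewrite Rabs_pos_eq; lra.
  - rewrite (Rabs_left (Im s)) by lra.
    replace (Im s / Re s) with (- Im s / - Re s) by (field; lra).
    pose proof (atan_bound (- Im s / - Re s)); rewrite Rabs_left; lra.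
Qed.

Lemma Arg_sector k s :
  PI / 2 < Rabs (Arg s) < PI - atan k -> Re s < 0 /\ k * - Re s < Rabs (Im s).
Proof.
  intros [Hlo Hhi].
  destruct (Rlt_or_le (Re s) 0) as [Hx|Hx].
  2: { pose proof (Rabs_Arg_Re_nonneg s Hx); lra. }
  split; [exact Hx|].
  rewrite (Rabs_Arg_Re_neg s Hx) in Hhi.
  assert (Hk : k < Rabs (Im s) / - Re s).
  { destruct (Rlt_or_le k (Rabs (Im s) / - Re s)) as [H|[H|H]]; [exact H| |].
    - apply atan_increasing in H; lra.
    - rewrite H in Hhi; lra. }
  apply Rmult_lt_compat_r with (r := - Re s) in Hk; [|lra].
  unfold Rdiv in Hk; rewrite Rmult_assoc, Rinv_l in Hk by lra; lra.
Qed.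

Lemma Omega_left_half_plane sigma s :
  Re s <= 0 ->
  - Re s * Cmod s / (2 * (Cmod s + Re s)) < sigma ->
  sigma < Rabs (Im s) -> sigma < Cmod s + Re s -> Omega sigma s.
Proof.
  intros Hx Hlo Him Hhi; split; left; split; lra.
Qed.

Lemma Omega2_bound_lt s :
  Re s < 0 -> 3 * - Re s < Cmod s ->
  - Re s * Cmod s / (2 * (Cmod s + Re s)) < (Cmod s + Re s) / 2.
Proof.
  intros Hx Hr.
  apply Rmult_lt_reg_r with (2 * (Cmod s + Re s)); [lra|].
  unfold Rdiv; rewrite Rmult_assoc, Rinv_l, Rmult_1_r by lra.
  (* [r^2 - 3 t r + t^2 > 0] once [r > 3 t] *)
  nra.
Qed.

Theorem mainTheorem19 :
  exists phi1 : R, PI / 2 < phi1 /\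
    forall s : Cplx, PI / 2 < Rabs (Arg s) < phi1 ->
      exists sigma : R, 0 < sigma /\ Omega sigma s /\
        sigma < (Re (Csqrt s)) ^ 2.
Proof.
  exists (PI - atan 3); split.
  { pose proof (atan_bound 3); lra. }
  intros s Hs.
  destruct (Arg_sector 3 s Hs) as [Hx Hy].
  pose proof (Rabs_Im_le_Cmod s) as Hr.
  pose proof (Cmod_le_Rabs_add s) as Hr'; rewrite (Rabs_left (Re s)) in Hr' by lra.
  set (L := - Re s * Cmod s / (2 * (Cmod s + Re s))).
  assert (HL : L < (Cmod s + Re s) / 2) by (apply Omega2_bound_lt; lra).
  assert (HL0 : 0 < L) by (apply Rdiv_lt_0_compat; nra).
  exists ((L + (Cmod s + Re s) / 2) / 2); split; [lra|split].
  - apply Omega_left_half_plane; unfold L in *; lra.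
  - rewrite Re_Csqrt_sqr; lra.
Qed.
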